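(* Let $X\in C^\infty(\mathbb T;\mathbb R)$ have at least one zero and no degenerate zero, and let $K^\pm$ be as below. For every sufficiently small $\sigma>0$ there exists a smooth function $\eta_\sigma:\mathbb T\to\mathbb R$ with $\eta_\sigma\equiv1$ on $K^+$, $\eta_\sigma\equiv0$ on $K^-$, and $$\Big|\frac{d}{dt}\Big|_{t=0}\eta_\sigma(X^t(x,\xi))\Big|=|X(x)\eta_\sigma'(x)|<\sigma\qquad\forall (x,\xi)\in\mathbb T\times\mathbb R,$$ where $X^t(x,\xi)$ is the $x$-component of the flow of $\mathcal X_h(x,\xi)=(X(x),-\xi X'(x))$.
   Context: $\mathbb T:=\mathbb R/2\pi\mathbb Z$; $K^+:=\{x:X(x)=0,X'(x)<0\}$, $K^-:=\{x:X(x)=0,X'(x)>0\}$. *)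

From Stdlib Require Import Reals.
From Coquelicot Require Import Coquelicot.
Open Scope R_scope.

(* A function on T = R/2piZ is represented by its 2pi-periodic lift to R. *)
Definition periodic2pi (f : R -> R) : Prop := forall x, f (x + 2 * PI) = f x.

Definition smooth (f : R -> R) : Prop := forall (n : nat) (x : R), ex_derive_n f n x.

Definition Kplus (X : R -> R) (x : R) : Prop := X x = 0 /\ Derive X x < 0.
Definition Kminus (X : R -> R) (x : R) : Prop := X x = 0 /\ Derive X x > 0.

Definition Xh (X : R -> R) (p : R * R) : R * R :=
  (X (fst p), - snd p * Derive X (fst p)).

Definition is_Xh_flow (X : R -> R) (Phi : R -> R * R -> R * R) : Prop :=
  forall p, Phi 0 p = p /\
    forall t, is_derive (fun s => fst (Phi s p)) t (fst (Xh X (Phi t p))) /\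
              is_derive (fun s => snd (Phi s p)) t (snd (Xh X (Phi t p))).

(* The transition function is eta = (1 - c(X) g) / 2, where g = X' / sqrt (X'^2 + X^2)
   is smooth and equals the sign of X' at every zero of X, and c(y) = (1 + y^2/s)^(-delta)
   is a cutoff with c(0) = 1.  Then X eta' = -(X c'(X) X' g + c(X) X g') / 2.  The first
   term is at most delta sup|X'| because |y c'(y)| <= 2 delta, and the second is at most
   eps sup|g'| / 2 once s is so small that c(y) |y| <= eps on the range of X; the small
   exponent delta is what makes both bounds possible simultaneously. *)

From Stdlib Require Import Reals Lra Lia ZArith.
From Coquelicot Require Import Coquelicot.
Open Scope R_scope.

Fixpoint Cn (n : nat) (f : R -> R) : Prop :=
  match n with
  | O => True
  | S m => (forall x, ex_derive f x) /\ Cn m (Derive f)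
  end.

Lemma Cn_ext n : forall f g, (forall x, f x = g x) -> Cn n f -> Cn n g.
Proof.
induction n as [|n IH]; intros f g E; simpl; auto.
intros [Hd Hn]; split.
- intro x; apply ex_derive_ext with f; auto.
- apply IH with (Derive f); auto.
  intro; apply Derive_ext; auto.
Qed.

Lemma Cn_weaken n : forall f, Cn (S n) f -> Cn n f.
Proof.
induction n as [|n IH]; simpl; intros f; auto.
intros [Hd Hn]; split; auto.
Qed.

Lemma Cn_const n : forall c, Cn n (fun _ => c).
Proof.
induction n as [|n IH]; simpl; intros c; auto.
split.
- intro; apply ex_derive_const.
- apply Cn_ext with (fun _ => 0); auto.
  intro; rewrite Derive_const; auto.
Qed.

Lemma Cn_id n : Cn n (fun x => x).
Proof.
destruct n; simpl; auto.
split.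
- intro; apply ex_derive_id.
- apply Cn_ext with (fun _ => 1); [|apply Cn_const].
  intro; rewrite Derive_id; auto.
Qed.

Lemma Cn_plus n : forall f g, Cn n f -> Cn n g -> Cn n (fun x => f x + g x).
Proof.
induction n as [|n IH]; simpl; intros f g; auto.
intros [Hf Hf'] [Hg Hg']; split.
- intro x; apply (ex_derive_plus f g x); auto.
- apply Cn_ext with (fun x => Derive f x + Derive g x); auto.
  intro; rewrite Derive_plus; auto.
Qed.

Lemma Cn_mult n : forall f g, Cn n f -> Cn n g -> Cn n (fun x => f x * g x).
Proof.
induction n as [|n IH]; intros f g Hf Hg; simpl; auto.
pose proof (Cn_weaken _ _ Hf); pose proof (Cn_weaken _ _ Hg).
destruct Hf as [Hf Hf']; destruct Hg as [Hg Hg']; split.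
- intro; apply ex_derive_mult; auto.
- apply Cn_ext with (fun x => Derive f x * g x + f x * Derive g x).
  + intro; rewrite Derive_mult; auto.
  + apply Cn_plus; apply IH; auto.
Qed.

Lemma Cn_comp n : forall f g, Cn n f -> Cn n g -> Cn n (fun x => f (g x)).
Proof.
induction n as [|n IH]; intros f g Hf Hg; simpl; auto.
pose proof (Cn_weaken _ _ Hf); pose proof (Cn_weaken _ _ Hg).
destruct Hf as [Hf Hf']; destruct Hg as [Hg Hg']; split.
- intro; apply ex_derive_comp; auto.
- apply Cn_ext with (fun x => Derive g x * Derive f (g x)).
  + intro x; rewrite (Derive_comp f g x); auto.
  + apply Cn_mult; auto.
Qed.

Lemma Cn_inv n : forall h, Cn n h -> (forall x, h x <> 0) -> Cn n (fun x => / h x).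
Proof.
induction n as [|n IH]; intros h Hh Hnz; simpl; auto.
pose proof (Cn_weaken _ _ Hh).
destruct Hh as [Hd Hh']; split.
- intro x; apply ex_derive_inv; auto.
- apply Cn_ext with (fun x => - Derive h x * (/ h x * / h x)).
  + intro x; rewrite Derive_inv; auto. field; auto.
  + apply Cn_mult; [|apply Cn_mult; apply IH; auto].
    apply Cn_ext with (fun x => -1 * Derive h x); [intro; ring|].
    apply Cn_mult; auto; apply Cn_const.
Qed.

Lemma Cn_exp n : Cn n exp.
Proof.
induction n as [|n IH]; simpl; auto.
split.
- intro x; eexists; apply is_derive_exp.
- apply Cn_ext with exp; auto.
  intro x; symmetry; apply is_derive_unique, is_derive_exp.
Qed.

Lemma Cn_ln n : forall h, Cn n h -> (forall x, 0 < h x) -> Cn n (fun x => ln (h x)).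
Proof.
destruct n as [|n]; intros h Hh Hpos; simpl; auto.
pose proof (Cn_weaken _ _ Hh).
destruct Hh as [Hd Hh'].
assert (D : forall x, is_derive (fun x => ln (h x)) x (Derive h x * / h x)).
{ intro x; apply (is_derive_comp ln h x).
  - apply is_derive_ln; auto.
  - apply Derive_correct; auto. }
split.
- intro x; eexists; apply D.
- apply Cn_ext with (fun x => Derive h x * / h x).
  + intro x; symmetry; apply is_derive_unique, D.
  + apply Cn_mult; auto.
    apply Cn_inv; auto. intro x; specialize (Hpos x); lra.
Qed.

Lemma Cn_Rpower n h c :
  Cn n h -> (forall x, 0 < h x) -> Cn n (fun x => Rpower (h x) c).
Proof.
intros Hh Hpos; unfold Rpower.
apply (Cn_comp n exp (fun x => c * ln (h x))); [apply Cn_exp|].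
apply Cn_mult; [apply Cn_const | apply Cn_ln; auto].
Qed.

Lemma Derive_n_S f n x : Derive_n f (S n) x = Derive_n (Derive f) n x.
Proof.
replace (S n) with (n + 1)%nat by lia.
rewrite <- Derive_n_comp; simpl.
apply Derive_n_ext; intro; apply Derive_ext; auto.
Qed.

Lemma smooth_Cn f : smooth f <-> forall n, Cn n f.
Proof.
split.
- intros Hf n; revert f Hf; induction n as [|n IH]; intros f Hf; simpl; auto.
  split.
  + intro x; apply (Hf 1%nat x).
  + apply IH; intros [|k] x; simpl; auto.
    apply ex_derive_ext with (Derive_n f (S k)); [apply Derive_n_S|].
    apply (Hf (S (S k)) x).
- intros Hf n; specialize (Hf n); revert f Hf; induction n as [|n IH]; intros f Hf x; simpl; auto.
  destruct Hf as [Hd Hn]; destruct n as [|n]; simpl; auto.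
  apply ex_derive_ext with (Derive_n (Derive f) n); [intro; symmetry; apply Derive_n_S|].
  apply (IH _ Hn x).
Qed.

Lemma periodic_nat f : periodic2pi f -> forall (n : nat) x, f (x + 2 * PI * INR n) = f x.
Proof.
intros Hp n; induction n as [|n IH]; intro x.
- simpl; f_equal; ring.
- rewrite S_INR, <- (IH x), <- (Hp (x + 2 * PI * INR n)); f_equal; ring.
Qed.

Lemma periodic_Z f : periodic2pi f -> forall (z : Z) x, f (x + 2 * PI * IZR z) = f x.
Proof.
intros Hp z x; destruct (Z_le_gt_dec 0 z) as [Hz|Hz].
- rewrite <- (Z2Nat.id z Hz), <- INR_IZR_INZ; apply periodic_nat; auto.
- replace z with (- Z.of_nat (Z.to_nat (- z)))%Z by lia.
  rewrite opp_IZR, <- INR_IZR_INZ.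
  rewrite <- (periodic_nat f Hp (Z.to_nat (- z)) (x + 2 * PI * - INR (Z.to_nat (- z)))).
  f_equal; ring.
Qed.

Lemma periodic_reduce f : periodic2pi f ->
  forall x, exists y, 0 <= y <= 2 * PI /\ f x = f y.
Proof.
intros Hp x; pose proof PI_RGT_0.
destruct (archimed (x / (2 * PI))) as [Hup Hup'].
exists (x + 2 * PI * IZR (1 - up (x / (2 * PI)))); split.
- rewrite minus_IZR.
  assert (x = 2 * PI * (x / (2 * PI))) by (field; lra).
  split; nra.
- symmetry; apply periodic_Z; auto.
Qed.

Lemma periodic_continuous_bounded f : periodic2pi f -> (forall x, continuous f x) ->
  exists B, forall x, Rabs (f x) <= B.
Proof.
intros Hp Hc; pose proof PI_RGT_0.
destruct (continuity_ab_maj (fun x => Rabs (f x)) 0 (2 * PI)) as [M [HM _]]; [lra| |].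
{ intros c _; apply continuity_pt_filterlim, continuous_Rabs_comp, Hc. }
exists (Rabs (f M)); intro x.
destruct (periodic_reduce f Hp x) as [y [Hy ->]]; auto.
Qed.

Lemma periodic_Derive f : periodic2pi f -> (forall x, ex_derive f x) -> periodic2pi (Derive f).
Proof.
intros Hp Hd x.
rewrite <- (Derive_ext (fun t => f (t + 2 * PI)) f x (fun t => Hp t)).
symmetry; apply is_derive_unique.
auto_derive; [apply Hd | apply Rmult_1_l].
Qed.

Lemma periodic_smooth_bounded f : periodic2pi f -> Cn 1 f ->
  exists B, 0 <= B /\ forall x, Rabs (f x) <= B.
Proof.
intros Hp [Hd _].
destruct (periodic_continuous_bounded f Hp) as [B HB].
{ intro x; exact (ex_derive_continuous f x (Hd x)). }
exists B; split; auto.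
apply Rle_trans with (Rabs (f 0)); [apply Rabs_pos | apply HB].
Qed.

Definition cutoff (s d y : R) : R := Rpower (1 + y * y / s) (- d).

Section Cutoff.

Variables s d : R.
Hypotheses (s_pos : 0 < s) (d_nonneg : 0 <= d).

Lemma cutoff_base_ge1 y : 1 <= 1 + y * y / s.
Proof.
assert (0 <= y * y / s) by (apply Rdiv_le_0_compat; nra); lra.
Qed.

Lemma cutoff_pos y : 0 < cutoff s d y.
Proof. apply exp_pos. Qed.

Lemma cutoff_le1 y : cutoff s d y <= 1.
Proof.
unfold cutoff; rewrite Rpower_Ropp.
pose proof (cutoff_base_ge1 y).
assert (H1 : Rpower (1 + y * y / s) 0 <= Rpower (1 + y * y / s) d) by (apply Rle_Rpower; auto).
rewrite Rpower_O in H1 by lra.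
apply Rle_trans with (/ 1); [apply Rinv_le_contravar; lra | right; apply Rinv_1].
Qed.

Lemma cutoff_0 : cutoff s d 0 = 1.
Proof.
unfold cutoff; replace (1 + 0 * 0 / s) with 1 by (field; lra).
unfold Rpower; rewrite ln_1, Rmult_0_r; apply exp_0.
Qed.

Lemma cutoff_antitone y z : Rabs y <= Rabs z -> cutoff s d z <= cutoff s d y.
Proof.
intro Hyz; unfold cutoff; rewrite !Rpower_Ropp.
apply Rinv_le_contravar; [apply exp_pos|].
apply Rle_Rpower_l; auto; split; [pose proof (cutoff_base_ge1 y); lra|].
assert (Hsq : forall t, t * t = Rabs t * Rabs t).
{ intro t; rewrite <- Rabs_mult; symmetry; apply Rabs_pos_eq; nra. }
assert (y * y <= z * z) by (rewrite (Hsq y), (Hsq z); pose proof (Rabs_pos y); nra).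
apply Rplus_le_compat_l, Rmult_le_compat_r; [left; apply Rinv_0_lt_compat|]; auto.
Qed.

Lemma is_derive_cutoff y :
  is_derive (cutoff s d) y (- 2 * d * y / (s + y * y) * cutoff s d y).
Proof.
unfold cutoff, Rpower, Rdiv; auto_derive.
- pose proof (cutoff_base_ge1 y); lra.
- field; split; [|lra].
  assert (0 <= y * y) by nra; lra.
Qed.

Lemma cutoff_slope_bound y : Rabs (y * Derive (cutoff s d) y) <= 2 * d.
Proof.
rewrite (is_derive_unique _ _ _ (is_derive_cutoff y)).
assert (Hyy : 0 <= y * y) by nra.
assert (Hq : 0 <= y * y / (s + y * y) <= 1).
{ split; [apply Rdiv_le_0_compat; lra|].
  apply Rmult_le_reg_r with (s + y * y); [lra|].
  unfold Rdiv; rewrite Rmult_assoc, Rinv_l; lra. }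
replace (y * (- 2 * d * y / (s + y * y) * cutoff s d y))
  with (- (2 * d * (y * y / (s + y * y)) * cutoff s d y)) by (field; lra).
pose proof (cutoff_pos y); pose proof (cutoff_le1 y).
rewrite Rabs_Ropp, Rabs_pos_eq.
- assert (y * y / (s + y * y) * cutoff s d y <= 1) by nra.
  nra.
- apply Rmult_le_pos; [apply Rmult_le_pos|]; lra.
Qed.

Lemma Cn_cutoff n : Cn n (cutoff s d).
Proof.
apply Cn_Rpower; [|intro y; pose proof (cutoff_base_ge1 y); lra].
apply Cn_plus; [apply Cn_const|].
apply Cn_mult; [apply Cn_mult; apply Cn_id | apply Cn_const].
Qed.

End Cutoff.

Lemma cutoff_mul_abs_small d eps N : 0 < d -> 0 < eps ->
  exists s, 0 < s /\ forall y, Rabs y <= N -> cutoff s d y * Rabs y <= eps.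
Proof.
intros Hd Heps.
set (M := Rabs N + eps + 1).
assert (HM : eps < M) by (unfold M; pose proof (Rabs_pos N); lra).
assert (HMe : 1 < M / eps).
{ apply Rmult_lt_reg_r with eps; auto.
  unfold Rdiv; rewrite Rmult_assoc, Rinv_l; lra. }
set (r := Rpower (M / eps) (/ d)).
assert (Hr : 1 < r).
{ unfold r; rewrite <- (Rpower_O (M / eps)) by lra.
  apply Rpower_lt; auto; apply Rinv_0_lt_compat; auto. }
set (s := eps * eps / (r - 1)).
assert (Hs : 0 < s) by (apply Rdiv_lt_0_compat; nra).
(* [s] is chosen so that the cutoff equals [eps / M] exactly at [|y| = eps]. *)
assert (Heq : cutoff s d eps = eps / M).
{ unfold cutoff; replace (1 + eps * eps / s) with r by (unfold s; field; lra).
  unfold r; rewrite Rpower_mult.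
  replace (/ d * - d) with (- (1)) by (field; lra).
  rewrite Rpower_Ropp, Rpower_1 by lra; field; lra. }
exists s; split; auto.
intros y Hy.
pose proof (Rabs_pos y); pose proof (cutoff_pos s d y).
destruct (Rle_or_lt (Rabs y) eps) as [Hsmall|Hlarge].
- pose proof (cutoff_le1 s d Hs (Rlt_le _ _ Hd) y); nra.
- assert (Hc : cutoff s d y <= eps / M).
  { rewrite <- Heq; apply cutoff_antitone; auto; [lra|].
    rewrite (Rabs_pos_eq eps); lra. }
  assert (Hy' : Rabs y <= M) by (unfold M; pose proof (Rle_abs N); lra).
  apply Rle_trans with (eps / M * M); [nra|].
  right; field; lra.
Qed.

Lemma Rpower_neg_half x : 0 < x -> Rpower x (- / 2) = / sqrt x.
Proof. intro Hx; rewrite Rpower_Ropp, Rpower_sqrt; auto. Qed.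

Lemma Rabs_mul_Rpower_neg_half a b :
  0 < a * a + b * b -> Rabs (a * Rpower (a * a + b * b) (- / 2)) <= 1.
Proof.
intro Hv; rewrite Rpower_neg_half by auto.
assert (Hs : 0 < sqrt (a * a + b * b)) by (apply sqrt_lt_R0; auto).
assert (Ha : Rabs a <= sqrt (a * a + b * b)).
{ rewrite <- sqrt_Rsqr_abs; apply sqrt_le_1_alt; unfold Rsqr; nra. }
rewrite Rabs_mult, Rabs_inv, (Rabs_pos_eq (sqrt _)) by lra.
apply Rmult_le_reg_r with (sqrt (a * a + b * b)); auto.
rewrite Rmult_assoc, Rinv_l; lra.
Qed.

Lemma mul_Rpower_sq_neg_half a : a <> 0 -> a * Rpower (a * a) (- / 2) = a / Rabs a.
Proof.
intro Ha; rewrite Rpower_neg_half by (destruct (Rlt_or_le 0 a); nra).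
fold (Rsqr a); rewrite sqrt_Rsqr_abs; reflexivity.
Qed.

Definition normalized_slope (X : R -> R) (x : R) : R :=
  Derive X x * Rpower (Derive X x * Derive X x + X x * X x) (- / 2).

Section NormalizedSlope.

Variable X : R -> R.
Hypotheses (X_smooth : smooth X) (X_periodic : periodic2pi X)
  (X_nondegenerate : forall x, X x = 0 -> Derive X x <> 0).

Lemma slope_norm_pos x : 0 < Derive X x * Derive X x + X x * X x.
Proof.
destruct (Req_dec (X x) 0) as [H0|H0].
- specialize (X_nondegenerate x H0); rewrite H0.
  destruct (Rlt_or_le 0 (Derive X x)); nra.
- destruct (Rlt_or_le 0 (X x)); nra.
Qed.

Lemma Cn_normalized_slope n : Cn n (normalized_slope X).
Proof.
pose proof (proj1 (smooth_Cn X) X_smooth) as CX.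
assert (CDX : forall n, Cn n (Derive X)) by (intro k; exact (proj2 (CX (S k)))).
apply Cn_mult; auto.
apply Cn_Rpower; [|exact slope_norm_pos].
apply Cn_plus; apply Cn_mult; auto.
Qed.

Lemma normalized_slope_periodic : periodic2pi (normalized_slope X).
Proof.
assert (HD : periodic2pi (Derive X)).
{ apply periodic_Derive; auto.
  exact (proj1 (proj1 (smooth_Cn X) X_smooth 1%nat)). }
intro x; unfold normalized_slope; rewrite !HD, !X_periodic; reflexivity.
Qed.

Lemma normalized_slope_bound x : Rabs (normalized_slope X x) <= 1.
Proof. apply Rabs_mul_Rpower_neg_half, slope_norm_pos. Qed.

End NormalizedSlope.

Lemma normalized_slope_at_zero X x : X x = 0 -> Derive X x <> 0 ->
  normalized_slope X x = Derive X x / Rabs (Derive X x).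
Proof.
intros H0 HD; unfold normalized_slope; rewrite H0, Rmult_0_r, Rplus_0_r.
apply mul_Rpower_sq_neg_half; auto.
Qed.

Lemma drift_bound (c g X : R -> R) x a e A G :
  ex_derive c (X x) -> ex_derive g x -> ex_derive X x ->
  0 <= c (X x) -> Rabs (X x * Derive c (X x)) <= a -> c (X x) * Rabs (X x) <= e ->
  Rabs (g x) <= 1 -> Rabs (Derive X x) <= A -> Rabs (Derive g x) <= G ->
  Rabs (X x * Derive (fun y => / 2 - / 2 * (c (X y) * g y)) x) <= (a * A + e * G) / 2.
Proof.
intros Dc Dg DX Hc Ha He Hg HA HG.
assert (HD : Derive (fun y => / 2 - / 2 * (c (X y) * g y)) x
             = - / 2 * (Derive c (X x) * Derive X x * g x + c (X x) * Derive g x)).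
{ apply is_derive_unique; auto_derive; [repeat split; auto|].
  change (Derive (fun y => X y)) with (Derive X);
  change (Derive (fun y => c y)) with (Derive c);
  change (Derive (fun y => g y)) with (Derive g); ring. }
rewrite HD.
replace (X x * (- / 2 * (Derive c (X x) * Derive X x * g x + c (X x) * Derive g x)))
  with (- / 2 * ((X x * Derive c (X x)) * Derive X x * g x + (c (X x) * X x) * Derive g x))
  by ring.
rewrite Rabs_mult, Rabs_Ropp, Rabs_inv, (Rabs_pos_eq 2) by lra.
assert (H1 : Rabs (X x * Derive c (X x) * Derive X x * g x) <= a * A).
{ rewrite !Rabs_mult, <- Rabs_mult.
  pose proof (Rabs_pos (X x * Derive c (X x))); pose proof (Rabs_pos (Derive X x));
  pose proof (Rabs_pos (g x)).
  apply Rle_trans with (a * A * 1); [|lra].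
  apply Rmult_le_compat; try apply Rmult_le_pos; auto.
  apply Rmult_le_compat; auto. }
assert (H2 : Rabs (c (X x) * X x * Derive g x) <= e * G).
{ rewrite !Rabs_mult, (Rabs_pos_eq (c (X x))) by auto.
  apply Rmult_le_compat; auto; [|apply Rabs_pos].
  apply Rmult_le_pos; auto; apply Rabs_pos. }
pose proof (Rabs_triang (X x * Derive c (X x) * Derive X x * g x) (c (X x) * X x * Derive g x)).
lra.
Qed.

Lemma is_derive_along_flow X Phi (eta : R -> R) x xi :
  is_Xh_flow X Phi -> ex_derive eta x ->
  is_derive (fun t => eta (fst (Phi t (x, xi)))) 0 (X x * Derive eta x).
Proof.
intros HPhi Heta; destruct (HPhi (x, xi)) as [H0 Ht].
destruct (Ht 0) as [Hfst _]; rewrite H0 in Hfst; simpl in Hfst.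
apply (is_derive_comp eta (fun t => fst (Phi t (x, xi))) 0); auto.
rewrite H0; apply Derive_correct; auto.
Qed.

Lemma div_succ_mul_lt u t : 0 < u -> 0 <= t -> u / (t + 1) * t < u.
Proof.
intros Hu Ht.
replace (u / (t + 1) * t) with (u - u / (t + 1)) by (field; lra).
assert (0 < u / (t + 1)) by (apply Rdiv_lt_0_compat; lra); lra.
Qed.

Definition transition (s d : R) (X : R -> R) (x : R) : R :=
  / 2 - / 2 * (cutoff s d (X x) * normalized_slope X x).

Lemma transition_at_zero s d X x : 0 < s -> X x = 0 -> Derive X x <> 0 ->
  transition s d X x = / 2 - / 2 * (Derive X x / Rabs (Derive X x)).
Proof.
intros Hs H0 HD; unfold transition.
rewrite normalized_slope_at_zero, H0, cutoff_0 by auto; ring.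
Qed.

Theorem mainTheorem15 (X : R -> R) :
  smooth X -> periodic2pi X ->
  (exists x, X x = 0) ->
  (forall x, X x = 0 -> Derive X x <> 0) ->
  exists sigma0, 0 < sigma0 /\
    forall sigma, 0 < sigma < sigma0 ->
      exists eta : R -> R,
        smooth eta /\ periodic2pi eta /\
        (forall x, Kplus X x -> eta x = 1) /\
        (forall x, Kminus X x -> eta x = 0) /\
        (forall Phi, is_Xh_flow X Phi -> forall x xi,
           is_derive (fun t => eta (fst (Phi t (x, xi)))) 0 (X x * Derive eta x)) /\
        (forall x xi : R, Rabs (X x * Derive eta x) < sigma).
Proof.
intros HX Hper _ Hnd.
(* The construction works for every [sigma > 0]. *)
exists 1; split; [lra|]; intros sigma [Hsigma _].
pose proof (proj1 (smooth_Cn X) HX) as CX.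
pose proof (Cn_normalized_slope X HX Hnd) as Cg.
destruct (periodic_smooth_bounded X Hper (CX 1%nat)) as [B [_ HB]].
destruct (periodic_smooth_bounded (Derive X)) as [A [HA0 HA]].
{ apply periodic_Derive; auto; apply (CX 1%nat). }
{ apply (CX 2%nat). }
destruct (periodic_smooth_bounded (Derive (normalized_slope X))) as [G [HG0 HG]].
{ apply periodic_Derive; [apply normalized_slope_periodic; auto | apply (Cg 1%nat)]. }
{ apply (Cg 2%nat). }
set (d := sigma / 4 / (A + 1)); set (eps := sigma / 2 / (G + 1)).
assert (Hd : 0 < d) by (apply Rdiv_lt_0_compat; lra).
assert (Heps : 0 < eps) by (apply Rdiv_lt_0_compat; lra).
destruct (cutoff_mul_abs_small d eps B Hd Heps) as [s [Hs Hsmall]].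
assert (Ceta : forall n, Cn n (transition s d X)).
{ intro n.
  apply Cn_ext with (fun x => / 2 + - / 2 * (cutoff s d (X x) * normalized_slope X x));
    [intro; unfold transition; ring|].
  apply Cn_plus; [apply Cn_const|].
  apply Cn_mult; [apply Cn_const|].
  apply Cn_mult; [apply Cn_comp; [apply Cn_cutoff | ] | ]; auto. }
exists (transition s d X); split; [|split; [|split; [|split; [|split]]]].
- apply smooth_Cn; auto.
- intro x; unfold transition; rewrite Hper, normalized_slope_periodic; auto.
- intros x [H0 HD]; rewrite transition_at_zero, Rabs_left by (auto; lra); field; lra.
- intros x [H0 HD]; rewrite transition_at_zero, Rabs_right by (auto; lra); field; lra.
- intros Phi HPhi x xi; apply is_derive_along_flow; auto; apply (Ceta 1%nat).
- intros x _.
  apply Rle_lt_trans with ((2 * d * A + eps * G) / 2).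
  + apply drift_bound.
    * apply (Cn_cutoff s d Hs 1%nat).
    * apply (Cg 1%nat).
    * apply (CX 1%nat).
    * apply Rlt_le, cutoff_pos.
    * apply cutoff_slope_bound; lra.
    * apply Hsmall, HB.
    * apply normalized_slope_bound; auto.
    * apply HA.
    * apply HG.
  + assert (d * A < sigma / 4) by (apply div_succ_mul_lt; lra).
    assert (eps * G < sigma / 2) by (apply div_succ_mul_lt; lra).
    lra.
Qed.
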